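(* There is an absolute constant $C$ such that for every $\epsilon\in(0,1]$ there is an $\epsilon$-edge differentially private algorithm which, given any graph $G$, outputs a real number $\hat\rho$ with $\mathbb E[|\hat\rho-\rho(G)|]\le C\sqrt{1/\epsilon}$.
   Context: For nonempty $S\subseteq V$, $\rho(S)=|E(S)|/|S|$ with $E(S)$ the edges inside $S$, and $\rho(G)=\max_{\emptyset\ne S\subseteq V}\rho(S)$. Edge-neighboring graphs have the same vertex set and edge sets differing in exactly one edge; an algorithm is $\epsilon$-edge DP if $\Pr[\mathcal A(G)\in O]\le e^\epsilon\Pr[\mathcal A(G')\in O]$ for all edge-neighboring $G,G'$ and all output sets $O$. *)

From HB Require Import structures.
From mathcomp Require Import all_boot all_order all_algebra.
From mathcomp Require Import all_classical all_reals all_analysis.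
Set Implicit Arguments. Unset Strict Implicit. Unset Printing Implicit Defensive.
Import Order.TTheory GRing.Theory Num.Theory.
Local Open Scope ring_scope.

Definition is_simple_graph (n : nat) (E : {set {set 'I_n}}) : bool :=
  [forall e in E, #|e| == 2%N].

Definition graph (n : nat) := {E : {set {set 'I_n}} | is_simple_graph E}.

Definition gedges (n : nat) (G : graph n) : {set {set 'I_n}} := proj1_sig G.

Definition induced_edges (n : nat) (G : graph n) (S : {set 'I_n}) : {set {set 'I_n}} :=
  [set e in gedges G | e \subset S].

Definition density (R : realType) (n : nat) (G : graph n) (S : {set 'I_n}) : R :=
  (#|induced_edges G S|)%:R / (#|S|)%:R.

(* rho(G) = max over nonempty S of rho(S) (all values are >= 0, so the
   neutral element 0 does not affect the max for n >= 1). *)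
Definition max_density (R : realType) (n : nat) (G : graph n) : R :=
  \big[Num.max/0]_(S : {set 'I_n} | (0 < #|S|)%N) density R G S.

Definition edge_neighbors (n : nat) (G G' : graph n) : Prop :=
  #|(gedges G :\: gedges G') :|: (gedges G' :\: gedges G)| = 1%N.

Definition graph_algorithm (R : realType) :=
  forall n : nat, graph n -> probability R R.

Definition edge_DP (R : realType) (eps : R) (A : graph_algorithm R) : Prop :=
  forall (n : nat) (G G' : graph n), edge_neighbors G G' ->
  forall O : set R, measurable O ->
    (A n G O <= (expR eps)%:E * A n G' O)%E.

From HB Require Import structures.
From mathcomp Require Import all_boot all_order all_algebra.
From mathcomp Require Import all_classical all_reals all_analysis.
From mathcomp Require Import measurable_realfun.
From mathcomp Require Import ring lra zify.
Import Order.TTheory GRing.Theory Num.Theory.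
Local Open Scope ring_scope.

(* The squared densest-subgraph density has edge sensitivity 1:
   if [S] attains [rho(G') = d] then [rho(G) >= d - 1/|S|], and
   [|S| >= 2 d + 1] makes the cross term of [(d - 1/|S|)^2] at most [1].
   Hence [floor (rho(G)^2)] moves by at most one between neighbouring graphs,
   and sampling [k] in [0 .. n^2] with probability proportional to
   [exp (- eps |k - floor (rho^2)| / 2)] is [eps]-private.  Releasing
   [sqrt k] costs [|sqrt k - rho| <= a + (|k - floor (rho^2)| + 1) / a] for
   every [a > 0]; the mean of [|k - floor (rho^2)|] is at most [8 / eps], and
   [a = sqrt (1 / eps)] balances both terms. *)

Lemma sum_distn_split {V : nmodType} (F : nat -> V) {m M : nat} : (m <= M)%N ->
  \sum_(k < M.+1) F `|k - m|%N = \sum_(i < m) F i.+1 + \sum_(i < M.+1 - m) F i.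
Proof.
move=> mM; rewrite -(big_mkord xpredT (fun k => F `|k - m|%N)).
rewrite (@big_cat_nat _ _ _ m) //=; last exact: leqW.
congr (_ + _).
  rewrite big_nat_rev /= add0n big_mkord; apply: eq_bigr => i _.
  by congr F; have := ltn_ord i; lia.
rewrite -{1}[m]add0n big_addn big_mkord; apply: eq_bigr => i _.
by congr F; lia.
Qed.

Lemma geometric_moment_id {R : comPzRingType} (r : R) (N : nat) :
  (1 - r) * \sum_(i < N) i%:R * r ^+ i + N%:R * r ^+ N = \sum_(i < N.+1) r ^+ i - 1.
Proof.
elim: N => [|N IH]; first by rewrite !big_ord0 big_ord1 mulr0 mul0r addr0 subrr.
rewrite big_ord_recr [in RHS]big_ord_recr /= mulrDr.
have -> : (1 - r) * \sum_(i < N) i%:R * r ^+ i =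
          \sum_(i < N.+1) r ^+ i - 1 - N%:R * r ^+ N by rewrite -IH; ring.
by rewrite -natr1 exprS; ring.
Qed.

Section GeometricBounds.
Context {R : realFieldType} {r : R}.
Hypotheses (r_ge0 : 0 <= r) (r_le1 : r <= 1).

Lemma geometric_moment_le (N : nat) :
  (1 - r) * \sum_(i < N) i%:R * r ^+ i <= \sum_(i < N) r ^+ i.
Proof.
have := geometric_moment_id r N; rewrite big_ord_recr /= => eq_sum.
have : r ^+ N <= 1 by rewrite exprn_ile1.
have : 0 <= N%:R * r ^+ N by rewrite mulr_ge0 ?exprn_ge0.
lra.
Qed.

Lemma distn_moment_le {m M : nat} : (m <= M)%N ->
  (1 - r) * \sum_(k < M.+1) `|k - m|%N%:R * r ^+ `|k - m|%N
    <= 2 * \sum_(k < M.+1) r ^+ `|k - m|%N.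
Proof.
move=> mM.
rewrite (sum_distn_split (fun d => d%:R * r ^+ d) mM) (sum_distn_split (fun d => r ^+ d) mM).
have := geometric_moment_le m.+1; rewrite !big_ord_recl /= mul0r add0r expr0.
have := geometric_moment_le (M.+1 - m).
have : 1 <= \sum_(i < M.+1 - m) r ^+ i.
  have : (0 < M.+1 - m)%N by lia.
  case: (M.+1 - m)%N => // N _; rewrite big_ord_recl expr0 lerDl.
  by apply: sumr_ge0 => i _; rewrite exprn_ge0.
have : 0 <= \sum_(i < m) r ^+ i.+1 by apply: sumr_ge0 => i _; rewrite exprn_ge0.
rewrite mulrDr; lra.
Qed.

End GeometricBounds.

Lemma natr_distn {R : numDomainType} (k m : nat) : `|k - m|%N%:R = `|k%:R - m%:R| :> R.
Proof. by rewrite natr_absz intr_norm rmorphB /=. Qed.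

(* Split on whether [sqrt x + sqrt y] is below [a]: if not, divide
   [|x - y| = |sqrt x - sqrt y| (sqrt x + sqrt y)] by it. *)
Lemma sqrt_dist_le {R : rcfType} (x y a : R) : 0 <= x -> 0 <= y -> 0 < a ->
  `|Num.sqrt x - Num.sqrt y| <= a + `|x - y| / a.
Proof.
move=> x_ge0 y_ge0 a_gt0.
rewrite -[x in `|x - _| / _]sqr_sqrtr // -[y in `|_ - y| / _]sqr_sqrtr //.
have := sqrtr_ge0 x; have := sqrtr_ge0 y.
move: (Num.sqrt x) (Num.sqrt y) => u v v_ge0 u_ge0.
rewrite subr_sqr normrM (ger0_norm (addr_ge0 u_ge0 v_ge0)).
have rest_ge0 : 0 <= `|u - v| * (u + v) / a.
  by rewrite divr_ge0 ?mulr_ge0 ?addr_ge0 // ltW.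
have [uv_le|uv_gt] := lerP (u + v) a.
  have : `|u - v| <= u + v by rewrite (le_trans (ler_normB u v)) ?ger0_norm.
  lra.
have : `|u - v| <= `|u - v| * (u + v) / a by rewrite ler_pdivlMr // ler_wpM2l // ltW.
lra.
Qed.

Section Density.
Context (R : realType) {n : nat}.
Implicit Types (G : graph n) (S : {set 'I_n}).

Lemma card_induced_edges G S : (2 * #|induced_edges G S| <= #|S| * (#|S|).-1)%N.
Proof.
have sub_pairs : induced_edges G S \subset [set e : {set 'I_n} | e \subset S & #|e| == 2].
  apply/fintype.subsetP => e; rewrite !inE => /andP[eG ->] /=.
  by case: G eG => E /= /forallP /(_ e) /implyP.
have := subset_leq_card sub_pairs; rewrite cards_draws bin2 => le_card.
apply: (leq_trans (leq_mul (leqnn 2) le_card)).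
by rewrite -[leqRHS](odd_double_half (#|S| * (#|S|).-1)) -mul2n leq_addl.
Qed.

Lemma density_ge0 G S : 0 <= density R G S.
Proof. by rewrite /density divr_ge0. Qed.

Lemma density_le_card G S : (0 < #|S|)%N -> 2 * density R G S + 1 <= #|S|%:R.
Proof.
move=> S_gt0; have s_gt0 : 0 < #|S|%:R :> R by rewrite ltr0n.
have card_eq : #|induced_edges G S|%:R = density R G S * #|S|%:R.
  by rewrite divfK // lt0r_neq0.
have := card_induced_edges G S; rewrite -(ler_nat R) !natrM -subn1 natrB // card_eq.
by move: (density R G S) (#|S|%:R) s_gt0 => d s; nra.
Qed.

Lemma max_density_ge0 G : 0 <= max_density R G.
Proof.
apply: (big_ind (fun x => 0 <= x)) => // [x y x_ge0 _|S' _].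
  by rewrite le_max x_ge0.
exact: density_ge0.
Qed.

Lemma density_le_max G S : (0 < #|S|)%N -> density R G S <= max_density R G.
Proof. exact: (le_bigmax_cond _ (P := fun S : {set 'I_n} => (0 < #|S|)%N)). Qed.

Lemma max_density_attained G : max_density R G = 0 \/
  exists2 S : {set 'I_n}, (0 < #|S|)%N & max_density R G = density R G S.
Proof.
apply: (big_ind (fun x => x = 0 \/ exists2 S : {set 'I_n}, (0 < #|S|)%N & x = density R G S)).
- by left.
- by move=> x y x_case y_case; rewrite /Num.max; case: ifP.
- by move=> S S_gt0; right; exists S.
Qed.

Lemma max_density_le_n G : max_density R G <= n%:R.
Proof.
have [->|[S S_gt0 ->]] := max_density_attained G; first exact: ler0n.
have : #|S|%:R <= n%:R :> R by rewrite ler_nat -[leqRHS]card_ord max_card.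
have := density_le_card G S S_gt0; have := density_ge0 G S; lra.
Qed.

End Density.

Section Neighbors.
Context (R : realType) {n : nat}.
Implicit Types (G : graph n) (S : {set 'I_n}).

Lemma edge_neighbors_sym G G' : edge_neighbors G G' -> edge_neighbors G' G.
Proof. by rewrite /edge_neighbors finset.setUC. Qed.

Lemma card_induced_edges_neighbor G G' S : edge_neighbors G G' ->
  (#|induced_edges G' S| <= #|induced_edges G S| + 1)%N.
Proof.
rewrite /edge_neighbors => card_diff.
have sub : induced_edges G' S \subset induced_edges G S :|: (gedges G' :\: gedges G).
  apply/fintype.subsetP => e; rewrite !inE => /andP[eG' eS].
  by case: (e \in gedges G); rewrite ?eS ?eG' ?orbT.
apply: (leq_trans (subset_leq_card sub)); apply: (leq_trans (leq_card_setU _ _)).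
by rewrite leq_add2l -card_diff subset_leq_card // finset.subsetUr.
Qed.

Lemma density_neighbor G G' S : edge_neighbors G G' ->
  density R G' S <= density R G S + #|S|%:R^-1.
Proof.
move=> nb; rewrite /density -[X in _ <= _ + X]mul1r -mulrDl ler_wpM2r //.
by have := card_induced_edges_neighbor G G' S nb; rewrite -(ler_nat R) natrD.
Qed.

Lemma max_density_sqr_neighbor G G' : edge_neighbors G G' ->
  max_density R G' ^+ 2 <= max_density R G ^+ 2 + 1.
Proof.
move=> nb; have rho_ge0 := max_density_ge0 R G.
have [->|[S S_gt0 ->]] := max_density_attained R G'.
  by rewrite expr0n /= addr_ge0 // sqr_ge0.
have := density_le_max R G S S_gt0; have := density_le_card R G' S S_gt0.
have := density_ge0 R G' S; have := density_neighbor G G' S nb.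
have s_gt0 : 0 < #|S|%:R :> R by rewrite ltr0n.
have st : #|S|%:R * #|S|%:R^-1 = 1 :> R by rewrite mulfV // lt0r_neq0.
have t_gt0 : 0 < #|S|%:R^-1 :> R by rewrite invr_gt0.
move: st t_gt0 s_gt0 rho_ge0.
move: (density R G' S) (density R G S) (max_density R G) (#|S|%:R : R) (#|S|%:R^-1 : R).
move=> d' d r s t st t_gt0 s_gt0 r_ge0 le_d' d'_ge0 le_s le_r.
have cross : 2 * d' * t <= 1 - t by nra.
have [|] := lerP (d' - t) 0 => ?; nra.
Qed.

End Neighbors.

Section LaplaceMechanism.
Context {R : realType} (eps : R) (M m : nat) (f : nat -> R).

Definition lap_base : R := expR (- (eps / 2)).
Definition lap_weight (k : nat) : R := lap_base ^+ `|k - m|%N.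
Definition lap_norm : R := \sum_(k < M.+1) lap_weight k.
Definition lap_prob (k : nat) : R := lap_weight k / lap_norm.

Lemma lap_base_gt0 : 0 < lap_base. Proof. exact: expR_gt0. Qed.

Lemma lap_weight_gt0 k : 0 < lap_weight k.
Proof. by rewrite exprn_gt0 // lap_base_gt0. Qed.

Lemma lap_norm_gt0 : 0 < lap_norm.
Proof.
rewrite /lap_norm big_ord_recl ltr_wpDr ?lap_weight_gt0 //.
by apply: sumr_ge0 => k _; exact/ltW/lap_weight_gt0.
Qed.

Lemma lap_prob_ge0 k : 0 <= lap_prob k.
Proof. by rewrite divr_ge0 // ltW // ?lap_weight_gt0 ?lap_norm_gt0. Qed.

Lemma sum_lap_prob : \sum_(k < M.+1) lap_prob k = 1.
Proof. by rewrite -mulr_suml mulfV // lt0r_neq0 // lap_norm_gt0. Qed.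

Definition lap_mech := msum (fun k => mscale (NngNum (lap_prob_ge0 k)) \d_(f k)) M.+1.

Lemma lap_mechE A : lap_mech A = (\sum_(k < M.+1) (lap_prob k)%:E * \d_(f k) A)%E.
Proof. by []. Qed.

Lemma lap_mech_setT : lap_mech setT = 1%E.
Proof.
rewrite lap_mechE; under eq_bigr do rewrite diracT mule1.
by rewrite sumEFin sum_lap_prob.
Qed.

HB.instance Definition _ := Measure.on lap_mech.
HB.instance Definition _ := Measure_isProbability.Build _ _ R lap_mech lap_mech_setT.

Lemma integral_lap_mech (g : _ -> \bar R) : measurable_fun setT g ->
  (forall x, 0 <= g x)%E ->
  (\int[lap_mech]_x g x = \sum_(k < M.+1) (lap_prob k)%:E * g (f k))%E.
Proof.
move=> mg g_ge0; rewrite ge0_integral_measure_sum //; apply: eq_bigr => k _.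
by rewrite ge0_integral_mscale // integral_dirac // diracT mul1e.
Qed.

End LaplaceMechanism.

Section LaplaceMechanismPrivacy.
Context {R : realType} (eps : R) (M : nat) (f : nat -> R).
Hypothesis eps_ge0 : 0 <= eps.

Lemma lap_base_le1 : lap_base eps <= 1.
Proof. by rewrite expR_le1 oppr_le0 divr_ge0. Qed.

Section Shift.
Context {m m' : nat}.
Hypotheses (le_m : (m <= m'.+1)%N) (le_m' : (m' <= m.+1)%N).

Lemma lap_weight_shift k : lap_base eps * lap_weight eps m k <= lap_weight eps m' k.
Proof.
rewrite -exprS; apply: (ler_wiXn2l (ltW (lap_base_gt0 eps)) lap_base_le1).
lia.
Qed.

Lemma lap_norm_shift : lap_base eps * lap_norm eps M m <= lap_norm eps M m'.
Proof. by rewrite mulr_sumr; apply: ler_sum => k _; exact: lap_weight_shift. Qed.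

End Shift.

Lemma lap_prob_shift m m' k : (m <= m'.+1)%N -> (m' <= m.+1)%N ->
  lap_prob eps M m k <= expR eps * lap_prob eps M m' k.
Proof.
move=> le_m le_m'.
have -> : expR eps = (lap_base eps ^+ 2)^-1.
  by rewrite -expRM_natl -expRN; congr expR; field.
have := lap_weight_shift le_m le_m' k; have := lap_norm_shift le_m' le_m.
have := lap_base_gt0 eps; have := lap_norm_gt0 eps M m; have := lap_norm_gt0 eps M m'.
have := lap_weight_gt0 eps m k; have := lap_weight_gt0 eps m' k; rewrite /lap_prob.
move: (lap_base eps) (lap_weight eps m k) (lap_weight eps m' k).
move: (lap_norm eps M m) (lap_norm eps M m') => Z Z' b u u' u'_gt0 u_gt0 Z'_gt0 Z_gt0 b_gt0.
move=> le_Z le_u.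
have le_u' : u <= u' / b by rewrite ler_pdivlMr // mulrC.
have le_Zinv : Z^-1 <= (b * Z')^-1 by rewrite lef_pV2 ?posrE ?mulr_gt0.
apply: (le_trans (ler_pM (ltW u_gt0) _ le_u' le_Zinv)); first by rewrite invr_ge0 ltW.
by rewrite (_ : _ * (u' / Z') = u' / b / (b * Z')) //; field; rewrite !lt0r_neq0.
Qed.

Lemma lap_mech_dp m m' (O : set R) : (m <= m'.+1)%N -> (m' <= m.+1)%N ->
  (lap_mech eps M m f O <= (expR eps)%:E * lap_mech eps M m' f O)%E.
Proof.
move=> le_m le_m'; rewrite !lap_mechE ge0_sume_distrr; last first.
  by move=> k _; rewrite mule_ge0 // lee_fin lap_prob_ge0.
apply: lee_sum => k _; rewrite !diracE muleA -!EFinM lee_fin ler_wpM2r //.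
exact: lap_prob_shift.
Qed.

End LaplaceMechanismPrivacy.

Section LaplaceError.
Context {R : realType} (eps : R) (M : nat).
Hypotheses (eps_gt0 : 0 < eps) (eps_le1 : eps <= 1).

Lemma lap_base_gap : eps / 4 <= 1 - lap_base eps.
Proof.
rewrite /lap_base expRN.
have E_gt0 : 0 < expR (eps / 2) := expR_gt0 _.
have le_E : 1 + eps / 2 <= expR (eps / 2) := expR_ge1Dx _.
rewrite -(ler_pM2r E_gt0) mulrBl mulVf ?lt0r_neq0 // mul1r.
move: (expR (eps / 2)) E_gt0 le_E => E E_gt0 le_E.
have gap_ge0 : 0 <= E - (1 + eps / 2) by lra.
have shrink_ge0 : 0 <= 1 - eps / 4 by move: eps_le1; lra.
have := mulr_ge0 gap_ge0 shrink_ge0; move: eps_gt0 eps_le1; nra.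
Qed.

Lemma lap_mean_dist m : (m <= M)%N ->
  \sum_(k < M.+1) lap_prob eps M m k * `|k - m|%N%:R <= 8 / eps.
Proof.
move=> mM.
have -> : \sum_(k < M.+1) lap_prob eps M m k * `|k - m|%N%:R =
    (\sum_(k < M.+1) `|k - m|%N%:R * lap_base eps ^+ `|k - m|%N) / lap_norm eps M m.
  rewrite mulr_suml; apply: eq_bigr => k _.
  by rewrite /lap_prob mulrAC (mulrC (lap_weight _ _ _)).
have Z_gt0 := lap_norm_gt0 eps M m.
have gap := lap_base_gap; have gap_gt0 : 0 < 1 - lap_base eps.
  by apply: lt_le_trans gap; rewrite divr_gt0.
rewrite ler_pdivrMr // -(ler_pM2l gap_gt0).
apply: (le_trans (distn_moment_le (ltW (lap_base_gt0 eps)) (lap_base_le1 eps (ltW eps_gt0)) mM)).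
rewrite -/(lap_norm eps M m) mulrA ler_wpM2r ?(ltW Z_gt0) //.
have bound_ge0 : 0 <= 8 / eps by rewrite divr_ge0 // ltW.
apply: le_trans (ler_wpM2r bound_ge0 gap).
by rewrite le_eqVlt (_ : _ * _ = 2) ?eqxx //; field; rewrite lt0r_neq0.
Qed.

Lemma lap_sqrt_error (h : R) : 0 <= h -> (Num.truncn h <= M)%N ->
  \sum_(k < M.+1) lap_prob eps M (Num.truncn h) k * `|Num.sqrt k%:R - Num.sqrt h|
    <= 10 * Num.sqrt (1 / eps).
Proof.
move=> h_ge0 hM; set m := Num.truncn h; set a := Num.sqrt (1 / eps).
have /andP[m_le_h h_lt_m1] := truncn_itv h_ge0.
have inv_eps_ge1 : 1 <= 1 / eps by rewrite ler_pdivlMr // mul1r.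
have a_ge1 : 1 <= a by rewrite -sqrtr1 ler_wsqrtr.
have a_gt0 : 0 < a by apply: lt_le_trans a_ge1.
have aa : a * a = 1 / eps by rewrite -expr2 sqr_sqrtr // (le_trans ler01).
have dist_le k : `|k%:R - h| <= `|k - m|%N%:R + 1.
  rewrite natr_distn; apply: (le_trans (ler_distD m%:R _ _)); rewrite lerD2l.
  by rewrite distrC ger0_norm ?subr_ge0 // lerBlDl natr1 ltW.
have term_le (k : 'I_M.+1) : lap_prob eps M m k * `|Num.sqrt k%:R - Num.sqrt h| <=
    lap_prob eps M m k * (a + a^-1) + lap_prob eps M m k * `|k - m|%N%:R / a.
  rewrite -mulrA -mulrDr ler_wpM2l ?lap_prob_ge0 //.
  apply: (le_trans (sqrt_dist_le k%:R h a (ler0n R k) h_ge0 a_gt0)); rewrite -addrA lerD2l.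
  rewrite -[X in _ <= X + _]mul1r -mulrDl ler_wpM2r ?invr_ge0 ?(ltW a_gt0) //.
  by rewrite [1 + _]addrC; exact: dist_le.
apply: (le_trans (ler_sum _ (fun k _ => term_le k))).
rewrite big_split /= -mulr_suml sum_lap_prob mul1r -mulr_suml.
have inv_a_le : a^-1 <= a.
  by apply: (le_trans _ a_ge1); rewrite invr_le1 // ?unitfE ?lt0r_neq0 // ltW.
have mean_le : (\sum_(k < M.+1) lap_prob eps M m k * `|k - m|%N%:R) / a <= 8 * a.
  by rewrite ler_pdivrMr // -mulrA aa mul1r; exact: lap_mean_dist.
lra.
Qed.

End LaplaceError.

Section PrivateDensity.
Context {R : realType}.

Lemma truncn_max_density_sqr_le n (G : graph n) :
  (Num.truncn (max_density R G ^+ 2) <= n * n)%N.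
Proof.
rewrite truncn_le_nat -natr1 natrM -expr2.
have : max_density R G ^+ 2 <= n%:R ^+ 2.
  by rewrite lerXn2r ?nnegrE ?max_density_ge0 ?ler0n ?max_density_le_n.
lra.
Qed.

Lemma truncn_max_density_sqr_neighbor n (G G' : graph n) : edge_neighbors G G' ->
  (Num.truncn (max_density R G' ^+ 2) <= (Num.truncn (max_density R G ^+ 2)).+1)%N.
Proof.
move=> nb; rewrite truncn_le_nat.
have := max_density_sqr_neighbor R G G' nb; have := truncnS_gt (max_density R G ^+ 2).
by rewrite -!natr1; lra.
Qed.

Definition private_density (eps : R) : graph_algorithm R := fun n G =>
  lap_mech eps (n * n) (Num.truncn (max_density R G ^+ 2)) (fun k => Num.sqrt k%:R).

Lemma private_density_dp (eps : R) : 0 <= eps -> edge_DP eps (private_density eps).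
Proof.
move=> eps_ge0 n G G' nb O _; apply: lap_mech_dp => //.
  exact/truncn_max_density_sqr_neighbor/edge_neighbors_sym.
exact: truncn_max_density_sqr_neighbor.
Qed.

Lemma private_density_error (eps : R) n (G : graph n) : 0 < eps -> eps <= 1 ->
  (\int[private_density eps n G]_x (`|x - max_density R G|)%:E
     <= (10 * Num.sqrt (1 / eps))%:E)%E.
Proof.
move=> eps_gt0 eps_le1; rewrite integral_lap_mech //; last first.
  by apply/measurable_EFinP; apply: measurableT_comp => //; exact: measurable_funB.
under eq_bigr do rewrite -EFinM.
rewrite sumEFin lee_fin.
have := lap_sqrt_error eps (n * n) eps_gt0 eps_le1 _ (sqr_ge0 (max_density R G))
  (truncn_max_density_sqr_le n G).
by rewrite sqrtr_sqr ger0_norm // max_density_ge0.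
Qed.

End PrivateDensity.

Theorem mainTheorem15 (R : realType) :
  exists C : R, forall eps : R, 0 < eps -> eps <= 1 ->
    exists A : graph_algorithm R,
      edge_DP eps A /\
      forall (n : nat) (G : graph n),
        (\int[A n G]_x (`|x - max_density R G|)%:E
           <= (C * Num.sqrt (1 / eps))%:E)%E.
Proof.
exists 10 => eps eps_gt0 eps_le1; exists (private_density eps); split.
  exact/private_density_dp/ltW.
by move=> n G; exact: private_density_error.
Qed.
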